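(* Let $L$ be a semiprime right Leibniz algebra and let $Q(L)$ be the Leibniz algebra of equivalence classes of partial derivations on essential ideals described in the context, with $L$ embedded via $\varphi(x)=(R_x)_L$. Then $Q(L)$ is semiprime and is an algebra of quotients of $L$ (i.e., of $\varphi(L)$). Moreover, $Q(L)$ is maximal among the algebras of quotients of $L$: if $S$ is an algebra of quotients of $L$, then the map $\psi:S\to Q(L)$, $s\mapsto (R_s)_{(L:s)}$ (where $R_s(x)=[x,s]$ for $x\in(L:s)$) is a monomorphism which is the identity when restricted to $L$ (i.e., $\psi(x)=\varphi(x)$ for $x\in L$).
   Context: A right Leibniz algebra satisfies $[x,[y,z]]=[[x,y],z]-[[x,z],y]$. Ideals are subspaces $I$ with $[I,L]\subseteq I$, $[L,I]\subseteq I$; $I^2$ is the span of $[x,y]$, $x,y\in I$. $L$ is semiprime if $[I,I]\ne\{0\}$ for every nonzero ideal $I$. An ideal is essential if it meets every nonzero ideal nontrivially; $\mathscr{J}_e(L)$ denotes the set of essential ideals. $\mathrm{PDer}(I,L)$ is the set of linear maps $\delta:I\to L$ with $\delta([x,y])=[\delta(x),y]+[x,\delta(y)]$. $Q(L)$ is the set of pairs $(\delta,I)$, $I\in\mathscr{J}_e(L)$, $\delta\in\mathrm{PDer}(I,L)$, modulo $(\delta,I)\equiv(\mu,J)$ iff $\delta,\mu$ agree on some $K\in\mathscr{J}_e(L)$ with $K\subseteq I\cap J$; the class is written $\delta_I$, with operations $p\delta_I=(p\delta)_I$, $(p\delta)(y)=\delta(py)$, $\delta_I+\mu_J=(\delta+\mu)_{I\cap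 J}$, $[\delta_I,\mu_J]=[\delta,\mu]_{(I\cap J)^2}$ with $[\delta,\mu](x)=\mu\delta(x)-\delta\mu(x)$; $\varphi(x)=(R_x)_L$ with $R_x(y)=[y,x]$. For a Leibniz algebra $S$ containing $L$ as subalgebra and $s\in S$: for $x\in L$ let $R_x,L_x$ act on $S$ by $R_x(u)=[u,x]$, $L_x(u)=[x,u]$, $\mathscr{A}(L)$ the associative algebra generated by them, ${}_L(s)=\mathbb{F}s+\{\sum\xi_i(s):\xi_i\in\mathscr{A}(L)\}$, $(L:s)=\{x\in L:[x,{}_L(s)]\subseteq L,[{}_L(s),x]\subseteq L\}$. $S$ is an algebra of quotients of $L$ if for all $p,q\in S$, $p\ne0$, there is $x\in(L:q)$ with $[x,p]\ne0$ or $y\in(L:q)$ with $[p,y]\ne0$. *)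

From mathcomp Require Import all_boot all_algebra.
From Stdlib Require Import ClassicalEpsilon.
Set Implicit Arguments. Unset Strict Implicit. Unset Printing Implicit Defensive.
Import GRing.Theory.
Local Open Scope ring_scope.

Record leibniz (F : fieldType) := Leibniz {
  lsort :> lmodType F;
  lbr : lsort -> lsort -> lsort;
  lbrDl : forall a x y z, lbr (a *: x + y) z = a *: lbr x z + lbr y z;
  lbrDr : forall a x y z, lbr z (a *: x + y) = a *: lbr z x + lbr z y;
  lbr_leibniz : forall x y z,
      lbr x (lbr y z) = lbr (lbr x y) z - lbr (lbr x z) y }.
Arguments lbr {F L} : rename.

(* A "bracket space": a carrier with a domain predicate, an equality
   (possibly a setoid equivalence, used for Q(L) whose elements are
   equivalence classes), and the vector-space/bracket operations.
   Leibniz algebras are bracket spaces with full domain and Leibniz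
   equality; Q(L) is the bracket space of valid representatives modulo
   the equivalence of the paper. *)
Record bspace (F : fieldType) := BSpace {
  bsort :> Type;
  bdom : bsort -> Prop;
  beq : bsort -> bsort -> Prop;
  bzero : bsort;
  badd : bsort -> bsort -> bsort;
  bscale : F -> bsort -> bsort;
  bbr : bsort -> bsort -> bsort }.
Arguments bdom {F B} : rename.
Arguments beq {F B} : rename.
Arguments bzero {F} B : rename.
Arguments badd {F B} : rename.
Arguments bscale {F B} : rename.
Arguments bbr {F B} : rename.

Section Generic.
Variables (F : fieldType) (B : bspace F).

Definition bsum (s : seq B) : B := foldr badd (bzero B) s.

(* subspace of B (a subset of the set of classes: saturated for beq) *)
Definition bsubspace (I : B -> Prop) : Prop :=
  (forall x, I x -> bdom x) /\
  (forall x y, I x -> beq x y -> bdom y -> I y) /\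
  I (bzero B) /\
  (forall x y, I x -> I y -> I (badd x y)) /\
  (forall a x, I x -> I (bscale a x)).

Definition bideal (I : B -> Prop) : Prop :=
  bsubspace I /\
  (forall x y, I x -> bdom y -> I (bbr x y) /\ I (bbr y x)).

Definition bnonzero (I : B -> Prop) : Prop :=
  exists x, I x /\ ~ beq x (bzero B).

Definition bsemiprime : Prop :=
  forall I, bideal I -> bnonzero I ->
    exists x y, I x /\ I y /\ ~ beq (bbr x y) (bzero B).

Definition bessential (I : B -> Prop) : Prop :=
  bideal I /\
  forall J, bideal J -> bnonzero J ->
    exists x, I x /\ J x /\ ~ beq x (bzero B).

End Generic.

Definition bmono (F : fieldType) (A B : bspace F) (f : A -> B) : Prop :=
  (forall x, bdom x -> bdom (f x)) /\
  (forall x y, bdom x -> bdom y -> beq x y -> beq (f x) (f y)) /\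
  (forall a x y, bdom x -> bdom y ->
     beq (f (badd (bscale a x) y)) (badd (bscale a (f x)) (f y))) /\
  (forall x y, bdom x -> bdom y -> beq (f (bbr x y)) (bbr (f x) (f y))) /\
  (forall x y, bdom x -> bdom y -> beq (f x) (f y) -> beq x y).

Arguments bmono {F} A B f.

Definition bspace_of (F : fieldType) (L : leibniz F) : bspace F :=
  @BSpace F L (fun _ => True) (@eq L) 0 +%R *:%R (@lbr F L).

Section QL.
Variables (F : fieldType) (L : leibniz F).

Record qrep := QRep { qI : L -> Prop; qd : L -> L }.

Definition pder (I : L -> Prop) (d : L -> L) : Prop :=
  (forall a x y, I x -> I y -> d (a *: x + y) = a *: d x + d y) /\
  (forall x y, I x -> I y -> d (lbr x y) = lbr (d x) y + lbr x (d y)).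

Definition qvalid (p : qrep) : Prop :=
  bessential (B := bspace_of L) (qI p) /\ pder (qI p) (qd p).

Definition qequiv (p q : qrep) : Prop :=
  exists K : L -> Prop, bessential (B := bspace_of L) K /\
    (forall x, K x -> qI p x /\ qI q x) /\
    (forall x, K x -> qd p x = qd q x).

Definition sqspan (I : L -> Prop) (z : L) : Prop :=
  exists s : seq (F * (L * L)),
    (forall t, t \in s -> I t.2.1 /\ I t.2.2) /\
    z = \sum_(t <- s) t.1 *: lbr t.2.1 t.2.2.

Definition qzero : qrep := QRep (fun _ => True) (fun _ => 0).
Definition qadd (p q : qrep) : qrep :=
  QRep (fun x => qI p x /\ qI q x) (fun x => qd p x + qd q x).
Definition qscale (a : F) (p : qrep) : qrep :=
  QRep (qI p) (fun y => qd p (a *: y)).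
Definition qbr (p q : qrep) : qrep :=
  QRep (sqspan (fun x => qI p x /\ qI q x))
       (fun x => qd q (qd p x) - qd p (qd q x)).

Definition Qsp : bspace F :=
  @BSpace F qrep qvalid qequiv qzero qadd qscale qbr.

Definition phi (x : L) : Qsp := QRep (fun _ => True) (fun y => lbr y x).

End QL.

Section Quotients.
Variables (F : fieldType) (L : leibniz F) (S : bspace F) (i : L -> S).

(* a word in the generators R_x (true) / L_x (false), applied to s:
   the head of the list is the outermost operator *)
Definition wapp (w : seq (bool * L)) (s : S) : S :=
  foldr (fun t u => if t.1 then bbr u (i t.2) else bbr (i t.2) u) s w.

(* u in _L(s) = F s + { xi(s) : xi in A(L) }, A(L) = span of nonempty words *)
Definition lsub (s u : S) : Prop :=
  exists (a : F) (ws : seq (F * seq (bool * L))),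
    (forall t, t \in ws -> (0 < size t.2)%N) /\
    beq u (badd (bscale a s) (bsum [seq bscale t.1 (wapp t.2 s) | t <- ws])).

Definition lcolon (s : S) (x : L) : Prop :=
  forall u, bdom u -> lsub s u ->
    (exists y, beq (bbr (i x) u) (i y)) /\ (exists y, beq (bbr u (i x)) (i y)).

Definition is_aoq : Prop :=
  bmono (bspace_of L) S i /\
  forall p q, bdom p -> bdom q -> ~ beq p (bzero S) ->
    (exists x, lcolon q x /\ ~ beq (bbr (i x) p) (bzero S)) \/
    (exists y, lcolon q y /\ ~ beq (bbr p (i y)) (bzero S)).

End Quotients.
Arguments is_aoq {F L} S i.

Definition preim (F : fieldType) (L S : leibniz F) (i : L -> S) (y : S) : L :=
  epsilon (inhabits 0) (fun x => i x = y).

Definition psi (F : fieldType) (L S : leibniz F) (i : L -> S) (s : S) : Qsp L :=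
  QRep (lcolon (S := bspace_of S) i s) (fun x => preim i (lbr (i x) s)).

(* Semiprimeness enters in two ways: I^2 is essential whenever I is, and an
   element of L annihilated from the right by an essential ideal is zero.  The
   latter makes phi injective and shows that a nonzero class delta_I has
   delta x <> 0 at some x of any prescribed essential ideal.  Since
   [phi x, delta_I] = phi (delta x) for x in I, a nonzero ideal of Q(L)
   contains some phi y <> 0, so its preimage under phi is a nonzero ideal of L;
   this gives semiprimeness of Q(L), and the same identity gives density once
   I is known to lie in (phi(L) : delta_I).  For an algebra of quotients S,
   density of S makes (L : s) an essential ideal on which R_s is a derivation
   with values in L, and the operations of S agree with those of Q(L) on
   suitable essential ideals. *)

From mathcomp Require Import all_boot all_algebra.
From Stdlib Require Import Classical ClassicalEpsilon.
Set Implicit Arguments. Unset Strict Implicit. Unset Printing Implicit Defensive.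
Import GRing.Theory.
Local Open Scope ring_scope.

Section LeibnizArithmetic.
Variables (F : fieldType) (M : leibniz F).
Implicit Types x y z : M.

Lemma lbr_addl x y z : lbr (x + y) z = lbr x z + lbr y z.
Proof. by have := lbrDl 1 x y z; rewrite !scale1r. Qed.

Lemma lbr_addr x y z : lbr z (x + y) = lbr z x + lbr z y.
Proof. by have := lbrDr 1 x y z; rewrite !scale1r. Qed.

Lemma lbr0l z : lbr 0 z = 0 :> M.
Proof. by apply: (@addrI _ (lbr 0 z)); rewrite -lbr_addl !addr0. Qed.

Lemma lbr0r z : lbr z 0 = 0 :> M.
Proof. by apply: (@addrI _ (lbr z 0)); rewrite -lbr_addr !addr0. Qed.

Lemma lbrZl a x z : lbr (a *: x) z = a *: lbr x z.
Proof. by have := lbrDl a x 0 z; rewrite !addr0 lbr0l addr0. Qed.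

Lemma lbrZr a x z : lbr z (a *: x) = a *: lbr z x.
Proof. by have := lbrDr a x 0 z; rewrite !addr0 lbr0r addr0. Qed.

Lemma lbrNl x z : lbr (- x) z = - lbr x z.
Proof. by rewrite -scaleN1r lbrZl scaleN1r. Qed.

Lemma lbrNr x z : lbr z (- x) = - lbr z x.
Proof. by rewrite -scaleN1r lbrZr scaleN1r. Qed.

Lemma lbrBl x y z : lbr (x - y) z = lbr x z - lbr y z.
Proof. by rewrite lbr_addl lbrNl. Qed.

Lemma lbrBr x y z : lbr z (x - y) = lbr z x - lbr z y.
Proof. by rewrite lbr_addr lbrNr. Qed.

Lemma lbr_leibnizD x y z : lbr (lbr x y) z = lbr x (lbr y z) + lbr (lbr x z) y.
Proof. by rewrite lbr_leibniz subrK. Qed.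

End LeibnizArithmetic.

(* Closes an identity of an abelian group: everything is moved to the left
   and each summand is cancelled against its opposite. *)
Ltac pull_summand t :=
  try rewrite [in LHS](addrC t); repeat rewrite [in LHS](addrAC _ t).
Ltac cancel_summands_rec :=
  match goal with
  | |- 0 = 0 => reflexivity
  | |- ?u - ?u = 0 => apply: subrr
  | |- - ?u + ?u = 0 => apply: addNr
  | |- ?s + (- ?u) = 0 => pull_summand u; rewrite subrK; cancel_summands_rec
  | |- ?s + ?t = 0 => pull_summand (GRing.opp t); rewrite addrK; cancel_summands_rec
  end.
Ltac cancel_summands := apply/eqP; rewrite -subr_eq0; apply/eqP;
  rewrite ?opprD ?opprK ?oppr0 ?addr0 ?add0r ?opprD ?opprK ?addrA;
  cancel_summands_rec.

Section Ideals.
Variables (F : fieldType) (L : leibniz F).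
Implicit Types (x y z : L) (I J K : L -> Prop).

Definition ideal I := bideal (B := bspace_of L) I.
Definition essential I := bessential (B := bspace_of L) I.
Definition semiprime := bsemiprime (bspace_of L).

Lemma idealP I : ideal I <->
  [/\ I 0, (forall x y, I x -> I y -> I (x + y)), (forall a x, I x -> I (a *: x))
    & (forall x y, I x -> I (lbr x y) /\ I (lbr y x))].
Proof.
split; first by case=> [[_ [_ [I0 [ID IZ]]]] Ibr]; split=> // x y Ix; apply: Ibr.
case=> I0 ID IZ Ibr; split; last by move=> x y Ix _; apply: Ibr.
by do 2!split=> //; move=> x y Ix <-.
Qed.

Section OneIdeal.
Variables (I : L -> Prop) (HI : ideal I).

Lemma ideal0 : I 0. Proof. by case/idealP: HI. Qed.

Lemma idealD x y : I x -> I y -> I (x + y).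
Proof. by case/idealP: HI => _ ID _ _; apply: ID. Qed.

Lemma idealZ a x : I x -> I (a *: x).
Proof. by case/idealP: HI => _ _ IZ _; apply: IZ. Qed.

Lemma ideal_lin a x y : I x -> I y -> I (a *: x + y).
Proof. by move=> Ix Iy; apply: idealD => //; apply: idealZ. Qed.

Lemma ideal_brl x y : I x -> I (lbr x y).
Proof. by case/idealP: HI => _ _ _ Ibr Ix; case: (Ibr _ y Ix). Qed.

Lemma ideal_brr x y : I x -> I (lbr y x).
Proof. by case/idealP: HI => _ _ _ Ibr Ix; case: (Ibr _ y Ix). Qed.

End OneIdeal.

Lemma idealI I J : ideal I -> ideal J -> ideal (fun x => I x /\ J x).
Proof.
move=> HI HJ; apply/idealP; split.
- by split; apply: ideal0.
- by move=> x y [Ix Jx] [Iy Jy]; split; apply: idealD.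
- by move=> a x [Ix Jx]; split; apply: idealZ.
move=> x y [Ix Jx]; split; split;
  by [apply: (ideal_brl HI) | apply: (ideal_brl HJ)
     | apply: (ideal_brr HI) | apply: (ideal_brr HJ)].
Qed.

Lemma idealT : ideal (fun _ => True).
Proof. by apply/idealP. Qed.

Lemma essential_ideal I : essential I -> ideal I.
Proof. by case. Qed.

Lemma essentialT : essential (fun _ => True).
Proof. by split; [exact: idealT | move=> J _ [x [Jx nx]]; exists x]. Qed.

Lemma essentialI I J : essential I -> essential J -> essential (fun x => I x /\ J x).
Proof.
move=> [HI EI] [HJ EJ]; split; first exact: idealI.
move=> K HK nK; have [x [Jx [Kx nx]]] := EJ K HK nK.
have [y [Iy [[Jy Ky] ny]]] := EI _ (idealI HJ HK) (ex_intro _ x (conj (conj Jx Kx) nx)).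
by exists y.
Qed.

Lemma sqspan0 I : sqspan I 0.
Proof. by exists [::]; rewrite big_nil. Qed.

Lemma sqspan_lin I a x y : sqspan I x -> sqspan I y -> sqspan I (a *: x + y).
Proof.
move=> [s [Is ->]] [r [Ir ->]].
exists ([seq (a * t.1, t.2) | t <- s] ++ r); split.
  by move=> t; rewrite mem_cat => /orP [/mapP [u /Is Iu ->] | /Ir].
rewrite big_cat big_map scaler_sumr; congr (_ + _).
by apply: eq_bigr => t _; rewrite scalerA.
Qed.

Lemma sqspan_br I x y : I x -> I y -> sqspan I (lbr x y).
Proof.
move=> Ix Iy; exists [:: (1, (x, y))]; rewrite big_seq1 scale1r.
by split=> // t; rewrite inE => /eqP ->.
Qed.

Lemma sqspan_ind I (P : L -> Prop) :
  P 0 -> (forall a x y, P x -> P y -> P (a *: x + y)) ->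
  (forall x y, I x -> I y -> P (lbr x y)) -> forall z, sqspan I z -> P z.
Proof.
move=> P0 Plin Pbr z [s [Is ->]]; elim: s Is => [|t s IHs] Is; first by rewrite big_nil.
rewrite big_cons; apply: Plin; first by case: (Is t (mem_head _ _)); apply: Pbr.
by apply: IHs => u us; apply: Is; rewrite inE us orbT.
Qed.

Lemma sqspan_mono I J z : (forall x, I x -> J x) -> sqspan I z -> sqspan J z.
Proof.
move=> IJ; apply: sqspan_ind; [exact: sqspan0 | by move=> *; apply: sqspan_lin |].
by move=> x y Ix Iy; apply: sqspan_br; apply: IJ.
Qed.

Lemma ideal_sqspan_sub I z : ideal I -> sqspan I z -> I z.
Proof.
move=> HI; apply: sqspan_ind; [exact: ideal0 | by move=> *; apply: ideal_lin |].
by move=> x y Ix _; apply: ideal_brl.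
Qed.

Lemma sqspan_ideal I : ideal I -> ideal (sqspan I).
Proof.
move=> HI; apply/idealP; split.
- exact: sqspan0.
- by move=> x y Ix Iy; rewrite -[x]scale1r; apply: sqspan_lin.
- by move=> a x Ix; rewrite -[a *: x]addr0; apply: sqspan_lin => //; apply: sqspan0.
move=> x y; move: x.
apply: (sqspan_ind (P := fun x => sqspan I (lbr x y) /\ sqspan I (lbr y x))).
- by rewrite lbr0l lbr0r; split; apply: sqspan0.
- by move=> a u v [? ?] [? ?]; rewrite lbrDl lbrDr; split; apply: sqspan_lin.
move=> u v Iu Iv; split.
  rewrite lbr_leibnizD -[lbr u _]scale1r.
  by apply: sqspan_lin; apply: sqspan_br => //; apply: (ideal_brl HI).
rewrite lbr_leibniz -scaleN1r addrC.
by apply: sqspan_lin; apply: sqspan_br => //; apply: (ideal_brr HI).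
Qed.

End Ideals.

Section Semiprime.
Variables (F : fieldType) (L : leibniz F) (spL : semiprime L).
Implicit Types (x y z : L) (I J K : L -> Prop).

Lemma essential_sqspan K : essential K -> essential (sqspan K).
Proof.
move=> EK; have HK := essential_ideal EK; split; first exact: sqspan_ideal.
move=> J HJ nJ; have [x [Kx [Jx nx]]] := proj2 EK J HJ nJ.
have [a [b [[Ka Ja] [[Kb Jb] nab]]]] :=
  spL (idealI HK HJ) (ex_intro _ x (conj (conj Kx Jx) nx)).
by exists (lbr a b); do !split=> //; [exact: sqspan_br | exact: ideal_brl].
Qed.

(* The right annihilator of K is an ideal whose intersection with K has
   zero square, so it meets the essential ideal K trivially. *)
Lemma essential_annihilator_eq0 K z :
  essential K -> (forall k, K k -> lbr k z = 0) -> z = 0.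
Proof.
move=> EK Kz; have HK := essential_ideal EK.
pose A z := forall k, K k -> lbr k z = 0.
have HA : ideal A.
  apply/idealP; split.
  - by move=> k _; rewrite lbr0r.
  - by move=> x y Ax Ay k Kk; rewrite lbr_addr Ax // Ay // addr0.
  - by move=> a x Ax k Kk; rewrite lbrZr Ax // scaler0.
  move=> x y Ax; split=> k Kk;
    by rewrite lbr_leibniz (Ax k Kk) lbr0l (Ax _ (ideal_brl HK y Kk)) subrr.
apply: NNPP => nz; have [x [Kx [Ax nx]]] := proj2 EK A HA (ex_intro _ z (conj Kz nz)).
have [a [b [[Ka Aa] [[Kb Ab] nab]]]] :=
  spL (idealI HK HA) (ex_intro _ x (conj (conj Kx Ax) nx)).
exact: nab (Ab a Ka).
Qed.

End Semiprime.

Section PartialDerivations.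
Variables (F : fieldType) (L : leibniz F).
Variables (D : L -> Prop) (HD : ideal D) (g : L -> L) (Hg : pder D g).

Lemma pder_lin a x y : D x -> D y -> g (a *: x + y) = a *: g x + g y.
Proof. by case: Hg => Glin _; apply: Glin. Qed.

Lemma pder_br x y : D x -> D y -> g (lbr x y) = lbr (g x) y + lbr x (g y).
Proof. by case: Hg => _ Gbr; apply: Gbr. Qed.

Lemma pder0 : g 0 = 0.
Proof.
have := pder_lin 1 (ideal0 HD) (ideal0 HD); rewrite !scale1r addr0 => g00.
by apply: (@addrI _ (g 0)); rewrite -g00 addr0.
Qed.

Lemma pderD x y : D x -> D y -> g (x + y) = g x + g y.
Proof. by move=> Dx Dy; have := pder_lin 1 Dx Dy; rewrite !scale1r. Qed.

Lemma pderZ a x : D x -> g (a *: x) = a *: g x.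
Proof. by move=> Dx; have := pder_lin a Dx (ideal0 HD); rewrite !addr0 pder0 addr0. Qed.

Lemma pder_sqspan E z : ideal E -> sqspan (fun x => D x /\ E x) z -> D z /\ E (g z).
Proof.
move=> HE; move: z; apply: sqspan_ind.
- by split; [apply: (ideal0 HD) | rewrite pder0; apply: (ideal0 HE)].
- move=> a x y [Dx Ex] [Dy Ey]; split; first exact: (ideal_lin HD).
  by rewrite pder_lin //; apply: (ideal_lin HE).
move=> x y [Dx Ex] [Dy Ey]; split; first exact: (ideal_brl HD).
rewrite pder_br //.
by apply: (idealD HE); [apply: (ideal_brr HE) | apply: (ideal_brl HE)].
Qed.

Lemma pderN : pder D (fun z => - g z).
Proof.
split=> [a x w Dx Dw | x w Dx Dw]; first by rewrite pder_lin // scalerN opprD.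
by rewrite pder_br // lbrNl lbrNr opprD.
Qed.

Variable y : L.

Lemma pder_commr : pder D (fun z => lbr (g z) y - g (lbr z y)).
Proof.
split=> [a x w Dx Dw | x w Dx Dw].
  rewrite (pder_lin a Dx Dw) !lbrDl.
  rewrite (pder_lin a (ideal_brl HD y Dx) (ideal_brl HD y Dw)).
  by rewrite scalerBr opprD addrACA.
have Dwy := ideal_brl HD y Dw; have Dxy := ideal_brl HD y Dx.
rewrite (pder_br Dx Dw) (lbr_leibnizD x w y).
rewrite (pderD (ideal_brr HD x Dwy) (ideal_brl HD w Dxy)).
rewrite (pder_br Dx Dwy) (pder_br Dxy Dw).
rewrite lbr_addl lbrBl lbrBr (lbr_leibniz (g x) w y) (lbr_leibniz x (g w) y).
cancel_summands.
Qed.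

End PartialDerivations.

Lemma pder_add (F : fieldType) (L : leibniz F) (D : L -> Prop) (g h : L -> L) :
  pder D g -> pder D h -> pder D (fun z => g z + h z).
Proof.
move=> Hg Hh; split=> [a x y Dx Dy | x y Dx Dy].
  by rewrite (pder_lin Hg a Dx Dy) (pder_lin Hh a Dx Dy) scalerDr addrACA.
by rewrite (pder_br Hg Dx Dy) (pder_br Hh Dx Dy) lbr_addl lbr_addr addrACA.
Qed.

Lemma pder_scale (F : fieldType) (L : leibniz F) (D : L -> Prop) (g : L -> L) (a : F) :
  ideal D -> pder D g -> pder D (fun z => g (a *: z)).
Proof.
move=> HD Hg; split=> [b x y Dx Dy | x y Dx Dy].
  rewrite (pderZ HD Hg a (ideal_lin HD b Dx Dy)) (pder_lin Hg b Dx Dy).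
  by rewrite (pderZ HD Hg a Dx) (pderZ HD Hg a Dy) scalerDr !scalerA mulrC.
rewrite (pderZ HD Hg a (ideal_brl HD y Dx)) (pder_br Hg Dx Dy).
by rewrite (pderZ HD Hg a Dx) (pderZ HD Hg a Dy) lbrZl lbrZr scalerDr.
Qed.

Lemma pder_comml (F : fieldType) (L : leibniz F) (D : L -> Prop) (g : L -> L) (y : L) :
  ideal D -> pder D g -> pder D (fun z => g (lbr z y) - lbr (g z) y).
Proof.
move=> HD Hg; have [Hlin Hbr] := pderN (pder_commr HD Hg y).
by split=> *; rewrite -!(opprB (lbr (g _) y)); [apply: Hlin | apply: Hbr].
Qed.


Section QuotientClasses.
Variables (F : fieldType) (L : leibniz F).
Implicit Types (x y z : L) (D K : L -> Prop) (g : L -> L) (p q u v w : qrep L).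

Lemma qequiv_refl p : essential (qI p) -> qequiv p p.
Proof. by move=> Ep; exists (qI p). Qed.

Lemma qequiv_sym p q : qequiv p q -> qequiv q p.
Proof.
move=> [K [EK [KI Kd]]]; exists K; split=> //; split=> z Kz; last by rewrite Kd.
by case: (KI z Kz).
Qed.

Lemma qequiv_trans p q u : qequiv p q -> qequiv q u -> qequiv p u.
Proof.
move=> [K1 [E1 [KI1 Kd1]]] [K2 [E2 [KI2 Kd2]]].
exists (fun x => K1 x /\ K2 x); split; first exact: essentialI.
split=> z [k1 k2]; last by rewrite Kd1 // Kd2.
by split; [case: (KI1 z k1) | case: (KI2 z k2)].
Qed.

Lemma qequiv_restrict K D g :
  essential K -> (forall x, K x -> D x) -> qequiv (QRep K g) (QRep D g).
Proof. by move=> EK KD; exists K; do !split=> //; apply: KD. Qed.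

Lemma qequiv_total p q :
  (forall z, qI p z /\ qI q z) -> qd p =1 qd q -> qequiv p q.
Proof. by move=> PQ pq; exists (fun _ => True); split; [exact: essentialT | split]. Qed.

Lemma qequiv_add p q u v : qequiv p u -> qequiv q v -> qequiv (qadd p q) (qadd u v).
Proof.
move=> [K1 [E1 [KI1 Kd1]]] [K2 [E2 [KI2 Kd2]]].
exists (fun x => K1 x /\ K2 x); split; first exact: essentialI.
split=> z [k1 k2] /=; last by rewrite Kd1 // Kd2.
by case: (KI1 z k1) => ? ?; case: (KI2 z k2).
Qed.

Lemma qequiv_scale a p q : qequiv p q -> qequiv (qscale a p) (qscale a q).
Proof.
move=> [K [EK [KI Kd]]]; exists K; split=> //; split=> z Kz; first exact: KI.
by rewrite /= Kd //; apply: (idealZ (essential_ideal EK)).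
Qed.

Lemma phi_valid x : qvalid (phi x).
Proof.
split; first exact: essentialT.
by split=> [a y z _ _ | y z _ _] /=; rewrite ?lbrDl // lbr_leibnizD addrC.
Qed.

Lemma phi_lin a x y : qequiv (phi (a *: x + y)) (qadd (qscale a (phi x)) (phi y)).
Proof. by apply: qequiv_total => // z /=; rewrite lbrDr lbrZl. Qed.

Lemma phi_add x y : qequiv (phi (x + y)) (qadd (phi x) (phi y)).
Proof. by apply: qequiv_total => // z /=; rewrite lbr_addr. Qed.

Lemma phi_scale a x : qequiv (phi (a *: x)) (qscale a (phi x)).
Proof. by apply: qequiv_total => // z /=; rewrite lbrZl lbrZr. Qed.

Lemma phi0 : qequiv (phi 0) (qzero L).
Proof. by apply: qequiv_total => // z /=; rewrite lbr0r. Qed.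

Lemma qclass_neq0_witness p D : qvalid p -> essential D -> ~ qequiv p (qzero L) ->
  exists x, qI p x /\ D x /\ qd p x <> 0.
Proof.
move=> [Ep _] ED p_neq0; apply: NNPP => no_witness; apply: p_neq0.
exists (fun x => qI p x /\ D x); split; first exact: essentialI.
split=> z [pz Dz] //; apply: NNPP => pz_neq0; apply: no_witness.
by exists z.
Qed.

End QuotientClasses.

Section SemiprimeQuotient.
Variables (F : fieldType) (L : leibniz F) (spL : semiprime L).
Implicit Types (x y z : L) (K : L -> Prop) (p q u v w : qrep L).

Lemma sqspan_pder_closed w K z : qvalid w -> ideal K ->
  sqspan (fun x => qI w x /\ K x) z -> K z /\ K (qd w z).
Proof.
move=> [Ew Hw] HK Kz; have HIw := essential_ideal Ew.
split; first by case: (ideal_sqspan_sub (idealI HIw HK) Kz).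
exact: (proj2 (pder_sqspan HIw Hw HK Kz)).
Qed.

Lemma qequiv_brl u v w : qvalid w -> qequiv u v -> qequiv (qbr u w) (qbr v w).
Proof.
move=> vw [K [EK [KI Kd]]]; have HK := essential_ideal EK.
exists (sqspan (fun x => qI w x /\ K x)); split.
  exact: essential_sqspan (essentialI (proj1 vw) EK).
split=> z Kz; last by have [Kz' Kwz] := sqspan_pder_closed vw HK Kz; rewrite /= !Kd.
by split; apply: sqspan_mono Kz => x [wx /KI []].
Qed.

Lemma qequiv_brr u v w : qvalid w -> qequiv u v -> qequiv (qbr w u) (qbr w v).
Proof.
move=> vw [K [EK [KI Kd]]]; have HK := essential_ideal EK.
exists (sqspan (fun x => qI w x /\ K x)); split.
  exact: essential_sqspan (essentialI (proj1 vw) EK).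
split=> z Kz; last by have [Kz' Kwz] := sqspan_pder_closed vw HK Kz; rewrite /= !Kd.
by split; apply: sqspan_mono Kz => x [wx /KI []].
Qed.

Lemma qbr_phil p x : qvalid p -> qI p x -> qequiv (qbr (phi x) p) (phi (qd p x)).
Proof.
move=> [Ep Hp] px; exists (sqspan (qI p)); split; first exact: essential_sqspan.
split=> z pz; first by split=> //; apply: sqspan_mono pz.
have := ideal_sqspan_sub (essential_ideal Ep) pz => {}pz.
by rewrite /= (pder_br Hp pz px) addrC addKr.
Qed.

Lemma qbr_phir p x : qvalid p -> qI p x -> qequiv (qbr p (phi x)) (phi (- qd p x)).
Proof.
move=> [Ep Hp] px; exists (sqspan (qI p)); split; first exact: essential_sqspan.
split=> z pz; first by split=> //; apply: sqspan_mono pz => y.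
have := ideal_sqspan_sub (essential_ideal Ep) pz => {}pz.
by rewrite /= (pder_br Hp pz px) lbrNr opprD addNKr.
Qed.

Lemma phi_br x y : qequiv (phi (lbr x y)) (qbr (phi x) (phi y)).
Proof. exact: qequiv_sym (qbr_phil (phi_valid y) I). Qed.

Lemma phi_inj x y : qequiv (phi x) (phi y) -> x = y.
Proof.
move=> [K [EK [_ Kd]]]; apply/eqP; rewrite -subr_eq0; apply/eqP.
apply: (essential_annihilator_eq0 spL EK) => k Kk.
by have /= xy := Kd k Kk; rewrite lbrBr xy subrr.
Qed.

Lemma phi_eq0 x : qequiv (phi x) (qzero L) -> x = 0.
Proof. by move/qequiv_trans/(_ (qequiv_sym (phi0 L)))/phi_inj. Qed.

Lemma phi_mono : bmono (bspace_of L) (Qsp L) (@phi F L).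
Proof.
split; first by move=> x _; apply: phi_valid.
split; first by move=> x y _ _ /= ->; apply: qequiv_refl; apply: essentialT.
split; first by move=> a x y _ _; apply: phi_lin.
split; first by move=> x y _ _; apply: phi_br.
by move=> x y _ _; apply: phi_inj.
Qed.

Lemma ideal_phi_preim (I : Qsp L -> Prop) : bideal I -> ideal (fun z => I (phi z)).
Proof.
move=> [[_ [Isat [I0 [ID IZ]]]] Ibr].
have Iphi p x : I p -> qequiv p (phi x) -> I (phi x).
  by move=> Ip px; apply: Isat px (phi_valid x).
apply/idealP; split.
- exact: Iphi I0 (qequiv_sym (phi0 L)).
- by move=> y z Iy Iz; apply: Iphi (ID _ _ Iy Iz) (qequiv_sym (phi_add y z)).
- by move=> a y Iy; apply: Iphi (IZ a _ Iy) (qequiv_sym (phi_scale a y)).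
move=> y z Iy; have [Iyz Izy] := Ibr _ (phi z) Iy (phi_valid z).
by split; [apply: Iphi Iyz _ | apply: Iphi Izy _]; apply: qequiv_sym; apply: phi_br.
Qed.

Lemma Q_semiprime : bsemiprime (Qsp L).
Proof.
move=> I HI [p [Ip p_neq0]]; have [[Ivalid [Isat _]] Ibr] := HI.
have [x [px [_ px_neq0]]] := qclass_neq0_witness (Ivalid p Ip) (essentialT L) p_neq0.
have Ipx : I (phi (qd p x)).
  apply: Isat (proj2 (Ibr p (phi x) Ip (phi_valid x))) _ (phi_valid _).
  exact: qbr_phil (Ivalid p Ip) px.
have [a [b [Ia [Ib ab_neq0]]]] :=
  spL (ideal_phi_preim HI) (ex_intro _ _ (conj Ipx px_neq0)).
exists (phi a), (phi b); do !split=> //.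
by move=> /(qequiv_trans (phi_br a b))/phi_eq0.
Qed.

End SemiprimeQuotient.

Section Density.
Variables (F : fieldType) (L : leibniz F) (spL : semiprime L).
Implicit Types (x y z : L) (D : L -> Prop) (g : L -> L) (p q u v : qrep L).

Definition rep_on D v := exists g, pder D g /\ qequiv v (QRep D g).

Lemma rep_on_self q : qvalid q -> rep_on (qI q) q.
Proof. by case: q => I d [EI Hd]; exists d; split=> //; apply: qequiv_refl. Qed.

Section RepresentedOn.
Variables (D : L -> Prop) (ED : essential D).
Let HD := essential_ideal ED.

Lemma rep_on_equiv u v : qequiv u v -> rep_on D v -> rep_on D u.
Proof. by move=> uv [g [Hg vg]]; exists g; split=> //; apply: qequiv_trans vg. Qed.

Lemma rep_on0 : rep_on D (qzero L).
Proof.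
exists (fun _ => 0); split.
  by split=> *; rewrite ?scaler0 ?addr0 ?lbr0l ?lbr0r ?addr0.
by apply: qequiv_sym; apply: qequiv_restrict.
Qed.

Lemma rep_onD u v : rep_on D u -> rep_on D v -> rep_on D (qadd u v).
Proof.
move=> [g [Hg ug]] [h [Hh vh]]; exists (fun z => g z + h z); split.
  exact: pder_add.
apply: qequiv_trans (qequiv_add ug vh) _.
by apply: qequiv_restrict => [|x []//]; apply: essentialI.
Qed.

Lemma rep_onZ a v : rep_on D v -> rep_on D (qscale a v).
Proof.
move=> [g [Hg vg]]; exists (fun z => g (a *: z)).
by split; [apply: pder_scale | exact: (qequiv_scale a vg)].
Qed.

Lemma rep_on_brr y v : rep_on D v -> rep_on D (qbr v (phi y)).
Proof.
move=> [g [Hg vg]]; exists (fun z => lbr (g z) y - g (lbr z y)).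
split; first exact: pder_commr.
apply: qequiv_trans (qequiv_brl spL (phi_valid y) vg) _.
apply: qequiv_restrict; first exact: essential_sqspan (essentialI ED (essentialT L)).
by move=> x /(ideal_sqspan_sub (idealI HD (idealT L))) [].
Qed.

Lemma rep_on_brl y v : rep_on D v -> rep_on D (qbr (phi y) v).
Proof.
move=> [g [Hg vg]]; exists (fun z => g (lbr z y) - lbr (g z) y).
split; first exact: pder_comml.
apply: qequiv_trans (qequiv_brr spL (phi_valid y) vg) _.
apply: qequiv_restrict; first exact: essential_sqspan (essentialI (essentialT L) ED).
by move=> x /(ideal_sqspan_sub (idealI (idealT L) HD)) [].
Qed.

Lemma rep_on_br_phi u x : rep_on D u -> D x ->
  (exists y, qequiv (qbr (phi x) u) (phi y)) /\
  (exists y, qequiv (qbr u (phi x)) (phi y)).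
Proof.
move=> [g [Hg ug]] Dx; have vg : qvalid (QRep D g) by [].
split; [exists (g x) | exists (- g x)].
  exact: qequiv_trans (qequiv_brr spL (phi_valid x) ug) (qbr_phil spL vg Dx).
exact: qequiv_trans (qequiv_brl spL (phi_valid x) ug) (qbr_phir spL vg Dx).
Qed.

End RepresentedOn.

(* Every element of the subalgebra generated by q and phi(L) is represented
   by a partial derivation on the domain of q. *)
Lemma Q_colon q x : qvalid q -> qI q x -> lcolon (S := Qsp L) (@phi F L) q x.
Proof.
move=> vq qx u _ [a [ws [_ Hu]]]; have Eq := proj1 vq.
apply: (rep_on_br_phi Eq _ qx); apply: (rep_on_equiv Hu).
apply: (rep_onD Eq); first by apply: (rep_onZ Eq); apply: rep_on_self.
elim: ws {Hu} => [|[c w] ws IHws] /=; first exact: rep_on0.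
apply: (rep_onD Eq) => //; apply: (rep_onZ Eq).
elim: w => [|[b y] w IHw] /=; first exact: rep_on_self.
by case: b; [apply: (rep_on_brr Eq) | apply: (rep_on_brl Eq)].
Qed.

Lemma Q_dense p q : qvalid p -> qvalid q -> ~ qequiv p (qzero L) ->
  exists x, lcolon (S := Qsp L) (@phi F L) q x /\ ~ qequiv (qbr (phi x) p) (qzero L).
Proof.
move=> vp vq p_neq0.
have [x [px [qx px_neq0]]] := qclass_neq0_witness vp (proj1 vq) p_neq0.
exists x; split; first exact: Q_colon.
by move=> /(qequiv_trans (qequiv_sym (qbr_phil spL vp px)))/(phi_eq0 spL).
Qed.

Lemma Q_aoq : is_aoq (Qsp L) (@phi F L).
Proof. by split; [exact: phi_mono | move=> p q vp vq p_neq0; left; apply: Q_dense]. Qed.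

End Density.


Section Embedding.
Variables (F : fieldType) (L S : leibniz F) (i : L -> S).
Hypothesis Hi : bmono (bspace_of L) (bspace_of S) i.
Implicit Types x y : L.

Lemma emb_lin a x y : i (a *: x + y) = a *: i x + i y.
Proof. by case: Hi => [_ [_ [ilin _]]]; apply: ilin. Qed.

Lemma emb_br x y : i (lbr x y) = lbr (i x) (i y).
Proof. by case: Hi => [_ [_ [_ [ibr _]]]]; apply: ibr. Qed.

Lemma emb_inj x y : i x = i y -> x = y.
Proof. by case: Hi => [_ [_ [_ [_ iinj]]]]; apply: iinj. Qed.

Lemma emb0 : i 0 = 0.
Proof.
have := emb_lin 1 0 0; rewrite !scale1r addr0 => i00.
by apply: (@addrI _ (i 0)); rewrite -i00 addr0.
Qed.

Lemma embD x y : i (x + y) = i x + i y.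
Proof. by have := emb_lin 1 x y; rewrite !scale1r. Qed.

Lemma embZ a x : i (a *: x) = a *: i x.
Proof. by have := emb_lin a x 0; rewrite !addr0 emb0 addr0. Qed.

Lemma embB x y : i (x - y) = i x - i y.
Proof. by rewrite embD -scaleN1r embZ scaleN1r. Qed.

Lemma emb_neq0 x : x <> 0 -> i x <> 0.
Proof. by move=> x_neq0 ix0; apply: x_neq0; apply: emb_inj; rewrite ix0 emb0. Qed.

End Embedding.

Section Psi.
Variables (F : fieldType) (L : leibniz F) (spL : semiprime L).
Variables (S : leibniz F) (i : L -> S).
Hypothesis Hi : is_aoq (bspace_of S) i.
Let Hmono := proj1 Hi.
Implicit Types (x y z : L) (s u : S) (K : L -> Prop).

Definition colon s := lcolon (S := bspace_of S) i s.
Definition lsubalg s u := lsub (S := bspace_of S) i s u.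
Definition words_sum s (ws : seq (F * seq (bool * L))) : S :=
  bsum (B := bspace_of S) [seq bscale t.1 (wapp (S := bspace_of S) i t.2 s) | t <- ws].

Lemma lsubalg_self s : lsubalg s s.
Proof. by exists 1, [::]; split=> //=; rewrite scale1r addr0. Qed.

Lemma words_sum_brl s z ws :
  lbr (i z) (words_sum s ws) = words_sum s [seq (t.1, (false, z) :: t.2) | t <- ws].
Proof. by elim: ws => [|t ws IHws] /=; rewrite ?lbr0r // lbr_addr lbrZr IHws. Qed.

Lemma words_sum_brr s z ws :
  lbr (words_sum s ws) (i z) = words_sum s [seq (t.1, (true, z) :: t.2) | t <- ws].
Proof. by elim: ws => [|t ws IHws] /=; rewrite ?lbr0l // lbr_addl lbrZl IHws. Qed.

Lemma lsubalg_brl s u z : lsubalg s u -> lsubalg s (lbr (i z) u).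
Proof.
move=> [a [ws [ws_nil Hu]]].
exists 0, ((a, [:: (false, z)]) :: [seq (t.1, (false, z) :: t.2) | t <- ws]); split.
  by move=> t; rewrite inE => /orP [/eqP -> | /mapP [v _ ->]].
by move: Hu => /= ->; rewrite scale0r add0r lbr_addr lbrZr words_sum_brl.
Qed.

Lemma lsubalg_brr s u z : lsubalg s u -> lsubalg s (lbr u (i z)).
Proof.
move=> [a [ws [ws_nil Hu]]].
exists 0, ((a, [:: (true, z)]) :: [seq (t.1, (true, z) :: t.2) | t <- ws]); split.
  by move=> t; rewrite inE => /orP [/eqP -> | /mapP [v _ ->]].
by move: Hu => /= ->; rewrite scale0r add0r lbr_addl lbrZl words_sum_brr.
Qed.

Lemma colon_br_image s x : colon s x ->
  (exists y, lbr (i x) s = i y) /\ (exists y, lbr s (i x) = i y).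
Proof. by move=> Cx; apply: Cx => //; apply: lsubalg_self. Qed.

Lemma colon_brl s x z : colon s x -> colon s (lbr x z).
Proof.
move=> Cx u _ Hu.
have [[y1 /= E1] _] := Cx _ I (lsubalg_brl z Hu).
have [[y2 /= E2] [y3 /= E3]] := Cx u I Hu.
have [_ [y4 /= E4]] := Cx _ I (lsubalg_brr z Hu).
split; [exists (y1 + lbr y2 z) | exists (lbr y3 z - y4)] => /=.
  by rewrite (emb_br Hmono) lbr_leibnizD E1 E2 (embD Hmono) (emb_br Hmono).
by rewrite (emb_br Hmono) lbr_leibniz E3 E4 (embB Hmono) (emb_br Hmono).
Qed.

Lemma colon_brr s x z : colon s x -> colon s (lbr z x).
Proof.
move=> Cx u _ Hu.
have [_ [y1 /= E1]] := Cx _ I (lsubalg_brl z Hu).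
have [[y2 /= E2] [y3 /= E3]] := Cx u I Hu.
have [_ [y4 /= E4]] := Cx _ I (lsubalg_brr z Hu).
split; [exists (lbr z y2 + y1) | exists (y4 - lbr y3 z)] => /=.
  by rewrite (emb_br Hmono) lbr_leibnizD E2 E1 (embD Hmono) (emb_br Hmono).
by rewrite (emb_br Hmono) lbr_leibniz E3 E4 (embB Hmono) (emb_br Hmono).
Qed.

Lemma colon_ideal s : ideal (colon s).
Proof.
apply/idealP; split.
- by move=> u _ Hu; split; exists 0 => /=; rewrite (emb0 Hmono) ?lbr0l ?lbr0r.
- move=> x y Cx Cy u _ Hu.
  have [[y1 /= E1] [y2 /= E2]] := Cx u I Hu; have [[y3 /= E3] [y4 /= E4]] := Cy u I Hu.
  split; [exists (y1 + y3) | exists (y2 + y4)] => /=;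
    by rewrite !(embD Hmono) ?lbr_addl ?lbr_addr ?E1 ?E2 ?E3 ?E4.
- move=> a x Cx u _ Hu; have [[y1 /= E1] [y2 /= E2]] := Cx u I Hu.
  split; [exists (a *: y1) | exists (a *: y2)] => /=;
    by rewrite !(embZ Hmono) ?lbrZl ?lbrZr ?E1 ?E2.
by move=> x z Cx; split; [apply: colon_brl | apply: colon_brr].
Qed.

Lemma colon_essential s : essential (colon s).
Proof.
split; first exact: colon_ideal.
move=> J HJ [y [Jy y_neq0]].
case: (proj2 Hi (i y) s I I (emb_neq0 Hmono y_neq0))
  => [[x [Cx xy_neq0]] | [x [Cx yx_neq0]]].
  exists (lbr x y); split; first exact: ideal_brl (colon_ideal s) _ _ Cx.
  split; first exact: ideal_brr.
  by move=> xy0; apply: xy_neq0 => /=; rewrite -(emb_br Hmono) xy0 (emb0 Hmono).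
exists (lbr y x); split; first exact: ideal_brr (colon_ideal s) _ _ Cx.
split; first exact: ideal_brl.
by move=> yx0; apply: yx_neq0 => /=; rewrite -(emb_br Hmono) yx0 (emb0 Hmono).
Qed.

Lemma emb_psi s x : colon s x -> i (qd (psi i s) x) = lbr (i x) s.
Proof.
move=> Cx; have [[y E] _] := colon_br_image Cx.
exact: epsilon_spec (inhabits 0) (fun z => i z = lbr (i x) s) (ex_intro _ y (esym E)).
Qed.

Lemma psi_pder s : pder (colon s) (qd (psi i s)).
Proof.
have HC := colon_ideal s.
split=> [a x y Cx Cy | x y Cx Cy]; apply: (emb_inj Hmono).
  by rewrite (emb_psi (ideal_lin HC a Cx Cy)) !(emb_lin Hmono) !emb_psi // lbrDl.
rewrite (emb_psi (ideal_brl HC y Cx)) (embD Hmono) !(emb_br Hmono) !emb_psi //.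
by rewrite lbr_leibnizD addrC.
Qed.

Lemma psi_valid s : qvalid (psi i s).
Proof. by split; [exact: colon_essential | exact: psi_pder]. Qed.

Lemma emb_annihilator_eq0 K z :
  essential K -> (forall k, K k -> lbr (i k) (i z) = 0) -> z = 0.
Proof.
move=> EK Kz; apply: (essential_annihilator_eq0 spL EK) => k Kk.
by apply: (emb_inj Hmono); rewrite (emb_br Hmono) (emb0 Hmono) Kz.
Qed.

Lemma annihilator_br_emb K u : ideal K -> (forall k, K k -> lbr (i k) u = 0) ->
  forall x k, K k -> lbr (i k) (lbr (i x) u) = 0 /\ lbr (i k) (lbr u (i x)) = 0.
Proof.
move=> HK Ku x k Kk; have Kkx := ideal_brl HK x Kk.
by rewrite !lbr_leibniz -(emb_br Hmono) (Ku k Kk) (Ku _ Kkx) lbr0l subrr.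
Qed.

(* If psi s and psi t agree on K then K annihilates s - t; density of S turns
   s - t <> 0 into a nonzero element of L annihilated by K. *)
Lemma psi_inj s t : qequiv (psi i s) (psi i t) -> s = t.
Proof.
move=> [K [EK [KI Kd]]]; have HK := essential_ideal EK.
have Kst k : K k -> lbr (i k) (s - t) = 0.
  move=> Kk; have [Cs Ct] := KI k Kk; have /= st := congr1 i (Kd k Kk).
  by rewrite !emb_psi // in st; rewrite lbrBr st subrr.
apply/eqP; rewrite -subr_eq0; apply/eqP; apply: NNPP => st_neq0.
have Kann := annihilator_br_emb HK Kst.
case: (proj2 Hi (s - t) (s - t) I I st_neq0) => [[x [Cx nx]] | [x [Cx nx]]].
- have [[z Ez] _] := colon_br_image Cx; apply: nx => /=.
  rewrite Ez (emb_annihilator_eq0 EK (z := z)) ?(emb0 Hmono) // => k Kk.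
  by rewrite -Ez; case: (Kann x k Kk).
- have [_ [z Ez]] := colon_br_image Cx; apply: nx => /=.
  rewrite Ez (emb_annihilator_eq0 EK (z := z)) ?(emb0 Hmono) // => k Kk.
  by rewrite -Ez; case: (Kann x k Kk).
Qed.

Lemma psi_lin a s t : qequiv (psi i (a *: s + t)) (qadd (qscale a (psi i s)) (psi i t)).
Proof.
exists (fun x => colon (a *: s + t) x /\ colon s x /\ colon t x); split.
  by do 2?apply: essentialI; apply: colon_essential.
split=> z [Cz [Csz Ctz]]; first by [].
have Caz := idealZ (colon_ideal s) a Csz.
by apply: (emb_inj Hmono); rewrite /= (embD Hmono) !emb_psi // lbrDr (embZ Hmono) lbrZl.
Qed.

Lemma psi_br s t : qequiv (psi i (lbr s t)) (qbr (psi i s) (psi i t)).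
Proof.
pose K x := colon (lbr s t) x /\ sqspan (fun x => colon s x /\ colon t x) x.
exists K; split.
  apply: essentialI; first exact: colon_essential.
  by apply: (essential_sqspan spL); apply: essentialI; apply: colon_essential.
split=> z [Cz Kz]; first by [].
have [Ctz Ctsz] := sqspan_pder_closed (psi_valid s) (colon_ideal t) Kz.
have Kz' : sqspan (fun x => colon t x /\ colon s x) z.
  by apply: sqspan_mono Kz => x [].
have [Csz Cstz] := sqspan_pder_closed (psi_valid t) (colon_ideal s) Kz'.
apply: (emb_inj Hmono); rewrite /= (embB Hmono) !emb_psi //.
by rewrite lbr_leibniz.
Qed.

Lemma psi_mono : bmono (bspace_of S) (Qsp L) (psi i).
Proof.
split; first by move=> s _; apply: psi_valid.
split; first by move=> s t _ _ /= ->; apply: qequiv_refl; apply: colon_essential.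
split; first by move=> a s t _ _; apply: psi_lin.
split; first by move=> s t _ _; apply: psi_br.
by move=> s t _ _; apply: psi_inj.
Qed.

Lemma psi_emb x : qequiv (psi i (i x)) (phi x).
Proof.
exists (colon (i x)); split; first exact: colon_essential.
split=> z Cz //; apply: (emb_inj Hmono).
by rewrite emb_psi // (emb_br Hmono).
Qed.

End Psi.

Theorem proposition4p6 (F : fieldType) (L : leibniz F) :
  bsemiprime (bspace_of L) ->
  bsemiprime (Qsp L) /\
  is_aoq (Qsp L) (@phi F L) /\
  (forall (S : leibniz F) (i : L -> S),
     is_aoq (bspace_of S) i ->
     bmono (bspace_of S) (Qsp L) (psi i) /\
     (forall x : L, beq (B := Qsp L) (psi i (i x)) (phi x))).
Proof.
move=> spL; split; first exact: Q_semiprime.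
split; first exact: Q_aoq.
by move=> S i Hi; split; [exact: psi_mono | exact: psi_emb].
Qed.
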